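(* Let $\tilde Q=\|q_{ik}\|$ define a $\tilde Q$-expansion of $[0,1]$ with $\inf_{i,k}q_{ik}=q_{\min}>0$, and let $\varPhi$ be the family of its cylindric intervals (interiors of cylinders of all ranks). Then $\varPhi$ is faithful for packing dimension calculation: $\dim_P(E,\varPhi)=\dim_{P(\mathit{unc})}(E)$ for every $E\subset[0,1]$.
   Context: $\tilde Q$-expansion: integers $N_k\ge2$, $q_{ik}>0$ for $k\in\mathbb N$, $i\in\{0,\dots,N_k-1\}$, $\sum_iq_{ik}=1$, $\prod_k\max_iq_{ik}=0$; with $\beta_{ik}=\sum_{l<i}q_{lk}$ each $x\in[0,1]$ is written $x=\sum_k\beta_{a_kk}\prod_{j<k}q_{a_jj}$. The rank-$n$ cylinder $\varDelta_{c_1\dots c_n}$ is the set of $x$ with $a_j(x)=c_j$ for $j\le n$; it is a closed interval of length $\prod_{j\le n}q_{c_jj}$. In $\mathbb R$ with $|A|$ = length: an uncentered $\varepsilon$-packing of $E$ is a countable family of pairwise disjoint open intervals of length $\le\varepsilon$ each meeting $E$; $\mathcal P^\alpha_{\varepsilon(\mathit{unc})}(E)=\sup\sum|E_i|^\alpha$ over these, $\mathcal P^\alpha_{0(\mathit{unc})}=\lim_{\varepsilon\to0}$, $\mathcal P^\alpha_{(\mathit{unc})}(E)=\inf\{\sum_j\mathcal P^\alpha_{0(\mathit{unc})}(E_j):E\subset\bigcup E_j\}$, $\dim_{P(\mathit{unc})}(E)=\inf\{\alpha:\mathcal P^\alpha_{(\mathit{unc})}(E)=0\}$; $\dim_P(E,\varPhi)$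 is defined the same way using only packings by intervals from $\varPhi$. *)

From HB Require Import structures.
From mathcomp Require Import all_boot all_order all_algebra.
From mathcomp Require Import all_classical all_reals all_analysis.
Set Implicit Arguments. Unset Strict Implicit. Unset Printing Implicit Defensive.
Import Order.TTheory GRing.Theory Num.Theory.
Import numFieldNormedType.Exports.
Local Open Scope classical_set_scope.
Local Open Scope ring_scope.

Section Packing.
Variable R : realType.

Definition oitv (I : R * R) : set R := [set x | I.1 < x < I.2].
Definition itv_len (I : R * R) : R := I.2 - I.1.

(** A countable family of open intervals is given by a sequence [I] of
    endpoint pairs together with the selector [J] of the indices actually
    used (so finite and countably infinite families are both covered).
    [adm] restricts which intervals may be used: [setT] gives the
    uncentered packings, a family [Phi] gives packings by intervals from Phi. *)
Definition packing (adm : set (set R)) (eps : R) (E : set R)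
    (J : nat -> bool) (I : nat -> R * R) : Prop :=
  [/\ (forall i, J i -> adm (oitv (I i))),
      (forall i, J i -> itv_len (I i) <= eps),
      (forall i, J i -> oitv (I i) `&` E !=set0) &
      (forall i j, J i -> J j -> i <> j -> oitv (I i) `&` oitv (I j) = set0)].

Definition packing_pre (adm : set (set R)) (alpha eps : R) (E : set R) : \bar R :=
  ereal_sup [set s | exists J I, packing adm eps E J I /\
                     s = (\sum_(i <oo | J i) ((itv_len (I i)) `^ alpha)%:E)%E].

(** P^alpha_0(E) = lim_{eps -> 0+} P^alpha_eps(E); since P^alpha_eps(E) is
    nondecreasing in eps, this limit is the infimum over eps > 0. *)
Definition packing0 (adm : set (set R)) (alpha : R) (E : set R) : \bar R :=
  ereal_inf [set packing_pre adm alpha eps E | eps in [set e : R | 0 < e]].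

Definition packing_measure (adm : set (set R)) (alpha : R) (E : set R) : \bar R :=
  ereal_inf [set (\sum_(j <oo) packing0 adm alpha (F j))%E
            | F in [set F : nat -> set R | E `<=` \bigcup_j F j]].

Definition packing_dim (adm : set (set R)) (E : set R) : \bar R :=
  ereal_inf [set alpha%:E | alpha in
              [set a : R | 0 <= a /\ packing_measure adm a E = 0%E]].

Definition dimP_unc (E : set R) : \bar R := packing_dim setT E.
Definition dimP_fam (Phi : set (set R)) (E : set R) : \bar R := packing_dim Phi E.

(** Q~-expansion data: [N k] = N_k, [q i k] = q_{ik}; positions k start at 0. *)
Definition beta (q : nat -> nat -> R) (i k : nat) : R := \sum_(l < i) q l k.

Definition cyl_left (q : nat -> nat -> R) (c : nat -> nat) (n : nat) : R :=
  \sum_(k < n) beta q (c k) k * \prod_(j < k) q (c j) j.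
Definition cyl_len (q : nat -> nat -> R) (c : nat -> nat) (n : nat) : R :=
  \prod_(j < n) q (c j) j.

Definition cylinder (q : nat -> nat -> R) (c : nat -> nat) (n : nat) : set R :=
  [set x | cyl_left q c n <= x <= cyl_left q c n + cyl_len q c n].

Definition cylindric_intervals (N : nat -> nat) (q : nat -> nat -> R) : set (set R) :=
  [set A | exists (n : nat) (c : nat -> nat),
     (forall j, (j < n)%N -> (c j < N j)%N) /\
     A = oitv (cyl_left q c n, cyl_left q c n + cyl_len q c n)].

End Packing.

From HB Require Import structures.
From mathcomp Require Import all_boot all_order all_algebra.
From mathcomp Require Import all_classical all_reals all_analysis.
From mathcomp Require Import ring lra.
Import Order.TTheory GRing.Theory Num.Theory.
Import numFieldNormedType.Exports.
Local Open Scope classical_set_scope.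
Local Open Scope ring_scope.
Set Implicit Arguments. Unset Strict Implicit. Unset Printing Implicit Defensive.

(** Packings by cylindric intervals are uncentered packings, so
    dim_P(E, Phi) <= dim_P(unc)(E).  Conversely let a < b with P^a(E, Phi) = 0.
    The countably many cylinder endpoints are null for every positive exponent
    and can be discarded.  An interval U of an uncentered packing then meets E
    at a point x interior to a cylinder D of some rank n with
    q_min |U| <= |D| < |U|, so U contains an endpoint of D.  Chosen cylinders
    of one rank whose left (resp. right) endpoint lies in their U are pairwise
    distinct, hence form a Phi-packing: each rank contributes at most twice the
    Phi-premeasure.  As |D| <= (1 - q_min)^n, writing b = a + 2g,
    |U|^b <= q_min^(-b) eps^g |D|^a ((1 - q_min)^g)^n, and the geometric series
    over the ranks gives P^b_eps(E) = O(eps^g), whence P^b_unc(E) = 0. *)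

Section PackingMeasure.
Variable R : realType.
Implicit Types (adm : set (set R)) (E : set R).

Lemma nneseries_le_bound (u : nat -> \bar R) (P : pred nat) (B : \bar R) :
  (forall i, P i -> (0 <= u i)%E) ->
  (forall k, (\sum_(0 <= i < k | P i) u i <= B)%E) ->
  (\sum_(i <oo | P i) u i <= B)%E.
Proof.
move=> u_ge0 partial_le.
have nd : nondecreasing_seq (fun n => (\sum_(0 <= i < n | P i) u i)%E).
  by apply: ereal_nondecreasing_series => n _; exact: u_ge0.
rewrite (cvg_lim _ (ereal_nondecreasing_cvgn nd)) //.
by apply: ge_ereal_sup => _ [k _ <-]; exact: partial_le.
Qed.

Lemma nneseries_term_le (u : nat -> \bar R) j :
  (forall n, (0 <= u n)%E) -> (u j <= \sum_(n <oo) u n)%E.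
Proof.
move=> u_ge0; apply: le_trans (nneseries_lim_ge j.+1 _) => //.
by rewrite big_nat_recr //= leeDr // sume_ge0.
Qed.

Lemma packing_partial_sum_le adm alpha eps E J I k :
  packing adm eps E J I ->
  (\sum_(0 <= i < k | J i) ((itv_len (I i)) `^ alpha)%:E
     <= packing_pre adm alpha eps E)%E.
Proof.
move=> hpack; apply: le_trans (nneseries_lim_ge k _) _.
  by move=> i _ _; rewrite lee_fin powR_ge0.
by apply: ereal_sup_ubound; exists J, I.
Qed.

Lemma packing_pre_ge0 adm alpha eps E : (0 <= packing_pre adm alpha eps E)%E.
Proof.
apply: le_ereal_sup_tmp; exists 0%E => //.
by exists xpred0, (fun=> (0, 0)); split; last by rewrite eseries_pred0.
Qed.

Lemma packing0_ge0 adm alpha E : (0 <= packing0 adm alpha E)%E.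
Proof. by apply: le_ereal_inf_tmp => _ [e _ <-]; exact: packing_pre_ge0. Qed.

Lemma packing_measure_ge0 adm alpha E : (0 <= packing_measure adm alpha E)%E.
Proof.
apply: le_ereal_inf_tmp => _ [F _ <-].
by apply: nneseries_ge0 => n _ _; exact: packing0_ge0.
Qed.

Lemma packing_pre_le adm adm' alpha eps E E' :
  adm `<=` adm' -> E `<=` E' ->
  (packing_pre adm alpha eps E <= packing_pre adm' alpha eps E')%E.
Proof.
move=> sub_adm sub_E; apply: ereal_sup_le => _ [J [I [[hadm hlen hmeet hdisj] ->]]].
exists J, I; split => //; split => //.
- by move=> i /hadm /sub_adm.
- by move=> i /hmeet [x [Ix /sub_E E'x]]; exists x.
Qed.

Lemma packing0_le adm adm' alpha E :
  adm `<=` adm' -> (packing0 adm alpha E <= packing0 adm' alpha E)%E.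
Proof.
move=> sub_adm; apply: le_ereal_inf_tmp => _ [e e_gt0 <-].
apply: ge_ereal_inf; exists (packing_pre adm alpha e E); first by exists e.
exact: packing_pre_le.
Qed.

Lemma packing_measure_le adm adm' alpha E :
  adm `<=` adm' ->
  (packing_measure adm alpha E <= packing_measure adm' alpha E)%E.
Proof.
move=> sub_adm; apply: le_ereal_inf_tmp => _ [F hF <-].
apply: ge_ereal_inf; exists (\sum_(j <oo) packing0 adm alpha (F j))%E.
  by exists F.
apply: lee_nneseries => [n _ _|n _]; first exact: packing0_ge0.
exact: packing0_le.
Qed.

Lemma packing0_eq0 adm beta E (eta0 C gam : R) :
  0 < eta0 -> 0 < gam -> 0 <= C ->
  (forall eta, 0 < eta -> eta <= eta0 ->
     (packing_pre adm beta eta E <= (C * eta `^ gam)%:E)%E) ->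
  packing0 adm beta E = 0%E.
Proof.
move=> eta0_gt0 gam_gt0 C_ge0 pre_le.
apply/le_anti; rewrite packing0_ge0 andbT.
apply/lee_addgt0Pr => e e_gt0; rewrite add0e.
have eC_gt0 : 0 < e / (C + 1) by apply: divr_gt0 => //; lra.
pose t := (e / (C + 1)) `^ gam^-1.
have t_gt0 : 0 < t by exact: powR_gt0.
pose eta := Order.min eta0 t.
have eta_gt0 : 0 < eta by rewrite lt_min eta0_gt0.
have eta_le_eta0 : eta <= eta0 by rewrite ge_min lexx.
have eta_le_t : eta <= t by rewrite ge_min lexx orbT.
apply: ge_ereal_inf; exists (packing_pre adm beta eta E); first by exists eta.
apply: le_trans (pre_le eta eta_gt0 eta_le_eta0) _; rewrite lee_fin.
have eta_pow : eta `^ gam <= e / (C + 1).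
  have <- : t `^ gam = e / (C + 1).
    by rewrite -powRrM mulVf ?powRr1 ?lt0r_neq0 // ltW.
  by apply: ge0_ler_powR; rewrite ?nnegrE ?(ltW gam_gt0) ?(ltW eta_gt0) ?(ltW t_gt0).
apply: le_trans (_ : (C + 1) * (e / (C + 1)) <= e).
  by apply: ler_pM; rewrite ?powR_ge0 //; lra.
by rewrite mulrC divfK //; apply/lt0r_neq0; lra.
Qed.

Lemma packing0_set1 beta (p : R) : 0 < beta -> packing0 setT beta [set p] = 0%E.
Proof.
move=> beta_gt0.
apply: (packing0_eq0 (eta0 := 1) (C := 1) (gam := beta)) => // eta eta_gt0 _.
apply: ge_ereal_sup => _ [J [I [[_ hlen hmeet hdisj] ->]]].
have Ip i : J i -> oitv (I i) p by move=> /hmeet [x [Ix /= <-]].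
have [[i0 Ji0]|noJ] := pselect (exists i, J i); last first.
  have J0 : J =1 xpred0 by move=> i; apply/negP => Ji; apply: noJ; exists i.
  by rewrite eseries_pred0 // lee_fin mul1r powR_ge0.
have J_i0 : [set i | J i] = [set i0].
  apply/seteqP; split => [i /= Ji|i /= ->] //; apply: contrapT => neq.
  have := hdisj _ _ Ji Ji0 neq; rewrite -subset0 => /(_ p); apply.
  by split; apply: Ip.
rewrite nneseries_esum => [|i _]; last by rewrite lee_fin powR_ge0.
rewrite J_i0 esum_set1 ?lee_fin ?powR_ge0 // mul1r.
have /andP[Il Iu] := Ip _ Ji0.
by apply: ge0_ler_powR; rewrite ?nnegrE /itv_len ?(ltW eta_gt0) ?hlen //; lra.
Qed.

Lemma packing_measure_eq0_cover adm beta E (F : nat -> set R) :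
  E `<=` \bigcup_j F j -> (forall j, packing0 adm beta (F j) = 0%E) ->
  packing_measure adm beta E = 0%E.
Proof.
move=> cover F0; apply/le_anti; rewrite packing_measure_ge0 andbT.
apply: ge_ereal_inf; exists 0%E => //; exists F => //.
by rewrite eseries0.
Qed.

Lemma packing_measure_lt1_cover adm alpha E :
  (packing_measure adm alpha E < 1)%E ->
  exists (F : nat -> set R) (eps : nat -> R), E `<=` \bigcup_j F j /\
    forall j, 0 < eps j /\ (packing_pre adm alpha (eps j) (F j) < 1)%E.
Proof.
move=> /ereal_inf_lt [_ [F cover <-] sum_lt1].
have pre_lt1 j : exists e, 0 < e /\ (packing_pre adm alpha e (F j) < 1)%E.
  have : (packing0 adm alpha (F j) < 1)%E.
    by apply: le_lt_trans sum_lt1; apply: nneseries_term_le => n; exact: packing0_ge0.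
  by move=> /ereal_inf_lt [_ [e e_gt0 <-] lt1]; exists e.
by have [eps heps] := choice pre_lt1; exists F, eps.
Qed.

Lemma packing_dim_eq adm adm' E : adm `<=` adm' ->
  (forall a b, 0 <= a -> a < b ->
     packing_measure adm a E = 0%E -> packing_measure adm' b E = 0%E) ->
  packing_dim adm E = packing_dim adm' E.
Proof.
move=> sub_adm null_up; rewrite /packing_dim; apply/le_anti/andP; split.
  apply: ereal_inf_le_tmp => _ [a [a_ge0 null_a] <-].
  exists a; last by [].
  split; first exact: a_ge0.
  apply/le_anti; rewrite packing_measure_ge0 andbT -null_a.
  exact: packing_measure_le.
apply: le_ereal_inf_tmp => _ [a [a_ge0 null_a] <-].
apply/lee_addgt0Pr => e e_gt0.
apply: ge_ereal_inf; exists (a + e)%:E; last by rewrite EFinD.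
exists (a + e); last reflexivity.
split; first by rewrite addr_ge0 // ltW.
by apply: null_up null_a; rewrite // ltrDl.
Qed.

End PackingMeasure.

Section RealBounds.
Variable R : realType.

Lemma geometric_sum_le (r : R) M : 0 < r < 1 -> \sum_(j < M) r ^+ j <= (1 - r)^-1.
Proof.
move=> /andP[r_gt0 r_lt1].
have r_norm : `|r| < 1 by rewrite gtr0_norm.
have := geometric_le_lim M ler01 r_gt0 r_norm.
rewrite mul1r seriesEnat /= big_mkord; apply: le_trans.
by apply: ler_sum => j _; rewrite mul1r.
Qed.

Lemma sum_le_by_levels (P : pred nat) (a : nat -> R) (n : nat -> nat) (r B : R) k :
  0 < r < 1 -> 0 <= B ->
  (forall j, \sum_(0 <= i < k | P i && (n i == j)) a i <= B) ->
  \sum_(0 <= i < k | P i) a i * r ^+ n i <= B / (1 - r).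
Proof.
move=> r01 B_ge0 level_le; have /andP[r_gt0 _] := r01.
pose M := (\max_(i < k) n i).+1.
have n_lt i : i \in index_iota 0 k -> (n i < M)%N.
  rewrite mem_index_iota => /= ik.
  by rewrite ltnS (leq_bigmax (F := fun i : 'I_k => n i) (Ordinal ik)).
rewrite big_seq_cond (partition_big (fun i => (inord (n i) : 'I_M)) xpredT) //=.
apply: le_trans (_ : \sum_(j < M) r ^+ j * B <= _); last first.
  by rewrite -mulr_suml mulrC ler_wpM2l // geometric_sum_le.
apply: ler_sum => j _.
rewrite (eq_bigr (fun i => r ^+ j * a i)); last first.
  by move=> i /andP[/andP[ik _] /eqP <-]; rewrite inordK ?n_lt // mulrC.
rewrite -mulr_sumr ler_wpM2l ?exprn_ge0 ?(ltW r_gt0) //.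
rewrite (eq_bigl (fun i => (i \in index_iota 0 k) && (P i && (n i == j)))).
  by rewrite -big_seq_cond.
move=> i; case ik: (i \in index_iota 0 k) => //=.
by rewrite -val_eqE /= inordK // n_lt.
Qed.

Lemma powR_le_split (alpha gam qmin rho eta d l : R) n :
  0 <= alpha -> 0 <= gam -> 0 < qmin -> 0 <= rho -> 0 <= d -> 0 < l ->
  qmin * d <= l -> l <= eta -> l <= rho ^+ n ->
  d `^ (alpha + gam + gam) <=
    qmin^-1 `^ (alpha + gam + gam) * eta `^ gam * (l `^ alpha * (rho `^ gam) ^+ n).
Proof.
move=> alpha_ge0 gam_ge0 qmin_gt0 rho_ge0 d_ge0 l_gt0 d_le l_le_eta l_le_rho.
set beta := alpha + gam + gam.
have beta_ge0 : 0 <= beta by rewrite /beta; lra.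
have d_le_l : d <= qmin^-1 * l by rewrite ler_pdivlMl.
have l_split : l `^ beta = l `^ alpha * l `^ gam * l `^ gam.
  by rewrite !powRD ?lt0r_neq0 ?implybT.
have l_eta : l `^ gam <= eta `^ gam.
  apply: ge0_ler_powR; rewrite ?nnegrE ?(ltW l_gt0) //.
  exact: le_trans (ltW l_gt0) l_le_eta.
have l_rho : l `^ gam <= (rho `^ gam) ^+ n.
  rewrite -powR_mulrn ?powR_ge0 // -powRAC powR_mulrn //.
  by apply: ge0_ler_powR; rewrite ?nnegrE ?(ltW l_gt0) ?exprn_ge0.
apply: le_trans (_ : (qmin^-1 * l) `^ beta <= _).
  apply: ge0_ler_powR; rewrite ?nnegrE ?mulr_ge0 ?invr_ge0 ?(ltW qmin_gt0) //.
  exact: ltW.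
rewrite powRM ?invr_ge0 ?(ltW qmin_gt0) ?(ltW l_gt0) // l_split -!mulrA.
apply: ler_wpM2l; first exact: powR_ge0.
rewrite [X in _ <= X]mulrCA; apply: ler_wpM2l; first exact: powR_ge0.
by apply: ler_pM; rewrite ?powR_ge0.
Qed.

Lemma oitv_endpoint (U D : R * R) x :
  oitv U x -> oitv D x -> itv_len D < itv_len U -> oitv U D.1 \/ oitv U D.2.
Proof.
rewrite /oitv /itv_len /= => /andP[Ux1 Ux2] /andP[Dx1 Dx2] lenDU.
by case: (ltP U.1 D.1) => UD1; [case: (ltP D.1 U.2) => DU2|]; [left|right|right];
  apply/andP; split; lra.
Qed.

Lemma exists_expr_lt (z d : R) : 0 <= z < 1 -> 0 < d ->
  exists n, z ^+ n < d.
Proof.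
move=> /andP[z_ge0 z_lt1] d_gt0.
have z_norm : `|z| < 1 by rewrite ger0_norm.
have /cvgr0Pnorm_lt /(_ d d_gt0) [n _ small] := cvg_expr z_norm.
by exists n; have := small n (leqnn n); rewrite /= ger0_norm // exprn_ge0.
Qed.

End RealBounds.

Section CylindricPackings.
Variables (R : realType) (N : nat -> nat) (q : nat -> nat -> R) (qmin : R).
Hypothesis N_ge2 : forall k, (2 <= N k)%N.
Hypothesis q_gt0 : forall k i, (i < N k)%N -> 0 < q i k.
Hypothesis q_sum1 : forall k, \sum_(i < N k) q i k = 1.
Hypothesis qmin_gt0 : 0 < qmin.
Hypothesis qmin_le : forall k i, (i < N k)%N -> qmin <= q i k.

Local Notation Phi := (cylindric_intervals N q).

Definition valid_word (c : nat -> nat) (n : nat) : Prop := forall j, (j < n)%N -> (c j < N j)%N.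

Definition cyl_itv (c : nat -> nat) (n : nat) : R * R :=
  (cyl_left q c n, cyl_left q c n + cyl_len q c n).

Lemma cyl_itv_len c n : itv_len (cyl_itv c n) = cyl_len q c n.
Proof. by rewrite /itv_len /= addrC addKr. Qed.

Lemma valid_word_le c n m : valid_word c n -> (m <= n)%N -> valid_word c m.
Proof. by move=> cv mn j jm; apply: cv; exact: leq_trans jm mn. Qed.

Lemma betaS i k : beta q i.+1 k = beta q i k + q i k.
Proof. by rewrite /beta big_ord_recr. Qed.

Lemma beta0 k : beta q 0 k = 0.
Proof. by rewrite /beta big_ord0. Qed.

Lemma beta_N k : beta q (N k) k = 1.
Proof. exact: q_sum1. Qed.

Lemma le_beta k i j : (i <= j)%N -> (j <= N k)%N -> beta q i k <= beta q j k.
Proof.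
elim: j => [|j IH]; first by rewrite leqn0 => /eqP ->.
rewrite leq_eqVlt => /orP[/eqP -> //|ij] jN.
rewrite betaS; apply: le_trans (IH ij (ltnW jN)) _.
by rewrite lerDl ltW // q_gt0.
Qed.

Lemma beta_ge0 k i : (i <= N k)%N -> 0 <= beta q i k.
Proof. by move=> iN; rewrite -(beta0 k); exact: le_beta. Qed.

Lemma beta_le1 k i : (i <= N k)%N -> beta q i k <= 1.
Proof. by move=> iN; rewrite -(beta_N k); exact: le_beta. Qed.

Lemma qD_le1 k i j : (i < j)%N -> (j < N k)%N -> q i k + q j k <= 1.
Proof.
move=> ij jN.
have := beta_le1 jN; rewrite betaS.
have := le_beta ij (ltnW jN); rewrite betaS.
have := beta_ge0 (ltnW (ltn_trans ij jN)); lra.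
Qed.

Lemma q_le k i : (i < N k)%N -> q i k <= 1 - qmin.
Proof.
have N1 : (1 < N k)%N := N_ge2 k.
case: i => [|i] iN.
  by have := qD_le1 (ltnSn 0) N1; have := qmin_le N1; lra.
have := qD_le1 (ltn0Sn i) iN; have := qmin_le (ltn_trans (ltn0Sn i) iN); lra.
Qed.

Lemma one_sub_qmin_bounds : 0 < 1 - qmin < 1.
Proof.
have N0 : (0 < N 0)%N by apply: leq_trans (N_ge2 0).
(* [lra] does not look at section hypotheses, hence the explicit [qmin_gt0]. *)
have := qmin_gt0; have := q_le N0; have := qmin_le N0.
by move=> ? ? ?; apply/andP; split; lra.
Qed.

Lemma cyl_leftS c n :
  cyl_left q c n.+1 = cyl_left q c n + beta q (c n) n * cyl_len q c n.
Proof. by rewrite /cyl_left big_ord_recr. Qed.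

Lemma cyl_lenS c n : cyl_len q c n.+1 = cyl_len q c n * q (c n) n.
Proof. by rewrite /cyl_len big_ord_recr. Qed.

Lemma cyl_left0 c : cyl_left q c 0 = 0.
Proof. by rewrite /cyl_left big_ord0. Qed.

Lemma cyl_len0 c : cyl_len q c 0 = 1.
Proof. by rewrite /cyl_len big_ord0. Qed.

Lemma eq_cyl_len c c' n : (forall j, (j < n)%N -> c j = c' j) ->
  cyl_len q c n = cyl_len q c' n.
Proof. by move=> cc'; apply: eq_bigr => j _; rewrite cc'. Qed.

Lemma eq_cyl_left c c' n : (forall j, (j < n)%N -> c j = c' j) ->
  cyl_left q c n = cyl_left q c' n.
Proof.
move=> cc'; apply: eq_bigr => j _; rewrite cc' //; congr (_ * _).
by apply: eq_bigr => i _; rewrite cc' // (ltn_trans (ltn_ord i)).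
Qed.

Lemma cyl_len_gt0 c n : valid_word c n -> 0 < cyl_len q c n.
Proof. by move=> cv; apply: prodr_gt0 => j _; apply: q_gt0; exact: cv. Qed.

Lemma cyl_len_le c n : valid_word c n -> cyl_len q c n <= (1 - qmin) ^+ n.
Proof.
elim: n => [|n IH] cv; first by rewrite cyl_len0 expr0.
have cn : (c n < N n)%N by exact: cv.
have cv_n := valid_word_le cv (leqnSn n).
rewrite cyl_lenS exprSr; apply: ler_pM.
- exact/ltW/cyl_len_gt0.
- exact/ltW/q_gt0.
- exact: IH.
- exact: q_le.
Qed.

Lemma cyl_subS c n : valid_word c n.+1 ->
  cyl_left q c n <= cyl_left q c n.+1 /\
  cyl_left q c n.+1 + cyl_len q c n.+1 <= cyl_left q c n + cyl_len q c n.
Proof.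
move=> cv; have cn : (c n < N n)%N by exact: cv.
have l_gt0 := cyl_len_gt0 (valid_word_le cv (leqnSn n)).
have := beta_le1 cn; rewrite betaS => b_le1.
have b_ge0 := beta_ge0 (ltnW cn).
rewrite cyl_leftS cyl_lenS; split; first by rewrite lerDl mulr_ge0 // ltW.
nra.
Qed.

Lemma cyl_cover n x : 0 <= x <= 1 -> exists c, valid_word c n /\
  cyl_left q c n <= x <= cyl_left q c n + cyl_len q c n.
Proof.
move=> x01; elim: n => [|n [c [cv /andP[xl xr]]]].
  by exists (fun=> 0%N); split => //; rewrite cyl_left0 cyl_len0 add0r.
set L := cyl_left q c n in xl xr *; set l := cyl_len q c n in xr *.
have l_gt0 : 0 < l by exact: cyl_len_gt0.
pose below i := x <= L + beta q i.+1 n * l.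
have N_gt0 : (0 < N n)%N by apply: leq_trans (N_ge2 n).
have ex_below : exists i, below i.
  by exists (N n).-1; rewrite /below prednK // beta_N mul1r.
have [i below_i minimal] := ex_minnP ex_below.
have i_lt : (i < N n)%N by rewrite -(prednK N_gt0) ltnS minimal // /below prednK // beta_N mul1r.
have above_i : L + beta q i n * l <= x.
  case: i below_i minimal i_lt => [|i] _ minimal _; first by rewrite beta0 mul0r addr0.
  by rewrite leNgt; apply/negP => /ltW /minimal; rewrite ltnn.
pose c' j := if j == n then i else c j.
have c'_eq j : (j < n)%N -> c' j = c j by move=> jn; rewrite /c' ifF // ltn_eqF.
exists c'; split.
  move=> j; rewrite ltnS leq_eqVlt => /orP[/eqP ->|jn]; first by rewrite /c' eqxx.
  by rewrite c'_eq // cv.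
rewrite cyl_leftS cyl_lenS (eq_cyl_left c'_eq) (eq_cyl_len c'_eq) -/L -/l /c' eqxx.
by move: below_i; rewrite /below betaS => ?; apply/andP; split; lra.
Qed.

Lemma cyl_same_rank_cases c c' n : valid_word c n -> valid_word c' n ->
  (cyl_left q c n = cyl_left q c' n /\ cyl_len q c n = cyl_len q c' n) \/
  cyl_left q c n + cyl_len q c n <= cyl_left q c' n \/
  cyl_left q c' n + cyl_len q c' n <= cyl_left q c n.
Proof.
elim: n => [|n IH] cv cv'.
  by left; rewrite !cyl_left0 !cyl_len0.
have [sub1 sub2] := cyl_subS cv; have [sub1' sub2'] := cyl_subS cv'.
have [[eL el]|[lt|lt]] := IH (valid_word_le cv (leqnSn n)) (valid_word_le cv' (leqnSn n));
  [|by right; left; lra|by right; right; lra].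
have cn : (c n < N n)%N by exact: cv.
have cn' : (c' n < N n)%N by exact: cv'.
have l_gt0 := cyl_len_gt0 (valid_word_le cv (leqnSn n)).
rewrite !cyl_leftS !cyl_lenS -eL -el.
set L := cyl_left q c n in l_gt0 *; set l := cyl_len q c n in l_gt0 *.
case: (ltngtP (c n) (c' n)) => [lt|lt|->]; last by left.
- have := le_beta lt (ltnW cn'); rewrite betaS => ?; right; left; nra.
- have := le_beta lt (ltnW cn); rewrite betaS => ?; right; right; nra.
Qed.

Lemma cyl_eq_or_disjoint c c' n : valid_word c n -> valid_word c' n ->
  cyl_itv c n = cyl_itv c' n \/ oitv (cyl_itv c n) `&` oitv (cyl_itv c' n) = set0.
Proof.
move=> cv cv'; have [[eL el]|sep] := cyl_same_rank_cases cv cv'.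
  by left; rewrite /cyl_itv eL el.
right; apply/seteqP; split => // y [/andP[y1 y2] /andP[y3 y4]].
rewrite /= in y1 y2 y3 y4.
by case: sep => sep; lra.
Qed.

(* [m] codes a finite word and a flag selecting the right or left endpoint of
   its cylinder, so that every cylinder endpoint is some [cyl_endpoint m]. *)
Definition cyl_endpoint (m : nat) : R :=
  if @unpickle (seq nat * bool)%type m is Some (s, at_right)
  then let I := cyl_itv (nth 0%N s) (size s) in if at_right then I.2 else I.1
  else 0.

Lemma cyl_endpoint_surj c n (at_right : bool) : exists m,
  cyl_endpoint m = if at_right then (cyl_itv c n).2 else (cyl_itv c n).1.
Proof.
exists (pickle (mkseq c n, at_right)); rewrite /cyl_endpoint pickleK size_mkseq.
have nth_c j : (j < n)%N -> nth 0%N (mkseq c n) j = c j by move=> jn; rewrite nth_mkseq.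
by rewrite /cyl_itv (eq_cyl_left nth_c) (eq_cyl_len nth_c).
Qed.

Lemma cyl_around x d : 0 <= x <= 1 -> (forall m, x != cyl_endpoint m) ->
  0 < d -> d <= 1 ->
  exists n c, [/\ valid_word c n, oitv (cyl_itv c n) x,
    qmin * d <= cyl_len q c n & cyl_len q c n < d].
Proof.
move=> x01 not_end d_gt0 d_le1.
pose small n := `[< exists c, [/\ valid_word c n,
  cyl_left q c n <= x <= cyl_left q c n + cyl_len q c n & cyl_len q c n < d] >].
have /andP[rho_gt0 rho_lt1] := one_sub_qmin_bounds.
have [n0 rho_n0] : exists n, (1 - qmin) ^+ n < d.
  by apply: exists_expr_lt d_gt0; rewrite rho_lt1 ltW.
have ex_small : exists n, small n.
  exists n0; apply/asboolP; have [c [cv xc]] := cyl_cover n0 x01.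
  by exists c; split => //; apply: le_lt_trans (cyl_len_le cv) rho_n0.
have [[|n] /asboolP [c [cv xc len_lt]] minimal] := ex_minnP ex_small.
  by move: len_lt; rewrite cyl_len0; lra.
have [sub_l sub_r] := cyl_subS cv.
have parent_len : d <= cyl_len q c n.
  rewrite leNgt; apply/negP => lt_d.
  have : small n.
    apply/asboolP; exists c; split => //; first exact: valid_word_le cv (leqnSn n).
    by move: xc => /andP[xl xr]; apply/andP; split; lra.
  by move/minimal; rewrite ltnn.
exists n.+1, c; split => //.
  have [m1 e1] := cyl_endpoint_surj c n.+1 false.
  have [m2 e2] := cyl_endpoint_surj c n.+1 true.
  move: xc (not_end m1) (not_end m2); rewrite e1 e2 /oitv /cyl_itv /=.
  by move=> /andP[xl xr] n1 n2; rewrite !lt_neqAle xl xr eq_sym n1 n2.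
rewrite cyl_lenS; have := qmin_le (cv n (ltnSn n)); have := qmin_gt0.
have := cyl_len_gt0 (valid_word_le cv (leqnSn n)); nra.
Qed.

Lemma cyl_packing_sum_le alpha eps B (G : set R) (S : pred nat)
    (c : nat -> nat -> nat) n k :
  (packing_pre Phi alpha eps G <= B%:E)%E ->
  (forall i, S i -> [/\ valid_word (c i) n,
     oitv (cyl_itv (c i) n) `&` G !=set0 & cyl_len q (c i) n <= eps]) ->
  (forall i j, S i -> S j -> i <> j -> cyl_itv (c i) n <> cyl_itv (c j) n) ->
  \sum_(0 <= i < k | S i) cyl_len q (c i) n `^ alpha <= B.
Proof.
move=> pre_le hS distinct.
have hpack : packing Phi eps G S (fun i => cyl_itv (c i) n).
  split => [i /hS[cv _ _]|i /hS[_ _ le_eps]|i /hS[] //|i j Si Sj ij].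
  - by exists n, (c i).
  - by rewrite cyl_itv_len.
  have [[cvi _ _] [cvj _ _]] := (hS i Si, hS j Sj).
  by case: (cyl_eq_or_disjoint cvi cvj) => // /(distinct _ _ Si Sj ij).
rewrite -lee_fin; apply: le_trans pre_le.
apply: le_trans (packing_partial_sum_le alpha k hpack).
by rewrite sumEFin lee_fin; under [X in _ <= X]eq_bigr do rewrite cyl_itv_len.
Qed.

Lemma rank_sum_le alpha eps B (G : set R) (J : pred nat) (U : nat -> R * R)
    (x : nat -> R) (n : nat -> nat) (c : nat -> nat -> nat) k j :
  (packing_pre Phi alpha eps G <= B%:E)%E ->
  (forall i, J i -> [/\ G (x i), oitv (U i) (x i), valid_word (c i) (n i),
     oitv (cyl_itv (c i) (n i)) (x i) &
     cyl_len q (c i) (n i) < itv_len (U i) /\ cyl_len q (c i) (n i) <= eps]) ->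
  (forall i i', J i -> J i' -> i <> i' -> oitv (U i) `&` oitv (U i') = set0) ->
  \sum_(0 <= i < k | J i && (n i == j)) cyl_len q (c i) (n i) `^ alpha <= B + B.
Proof.
move=> pre_le hJ disjU.
(* Cylinders whose chosen endpoint lies in their (pairwise disjoint) [U i]
   are pairwise distinct, so they form a packing by cylindric intervals. *)
have packing_side (side : R * R -> R) (S : pred nat) :
    (forall i, S i -> [/\ J i, n i = j & oitv (U i) (side (cyl_itv (c i) j))]) ->
    \sum_(0 <= i < k | S i) cyl_len q (c i) j `^ alpha <= B.
  move=> hS; apply: (cyl_packing_sum_le _ pre_le) => [i Si|i i' Si Si' ii' same].
    have [Ji <- _] := hS i Si; have [Gx _ cv xc [_ le_eps]] := hJ i Ji.
    by split => //; exists (x i).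
  have [[Ji _ Ui] [Ji' _ Ui']] := (hS i Si, hS i' Si').
  have := disjU _ _ Ji Ji' ii'; rewrite -subset0; apply.
  by split; [exact: Ui|rewrite same].
rewrite (bigID (fun i => (U i).1 < (cyl_itv (c i) (n i)).1 < (U i).2)) /=.
apply: lerD.
all: under eq_bigr => i /andP[/andP[_ /eqP ->] _] do [].
- apply: (packing_side fst) => i /andP[/andP[Ji /eqP nj] Ui].
  by split => //; rewrite -nj.
- apply: (packing_side snd) => i /andP[/andP[Ji /eqP nj] notUi].
  split => //; rewrite -nj.
  have [Gx Ux cv xc [lt_len _]] := hJ i Ji.
  have := oitv_endpoint Ux xc; rewrite cyl_itv_len => /(_ lt_len).
  by case => // Ui; rewrite Ui in notUi.
Qed.

Lemma cyls_in_packing (G : set R) (J : pred nat) (U : nat -> R * R) :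
  (forall y, G y -> 0 <= y <= 1 /\ forall m, y != cyl_endpoint m) ->
  (forall i, J i -> itv_len (U i) <= 1) ->
  (forall i, J i -> oitv (U i) `&` G !=set0) ->
  exists (x : nat -> R) (n : nat -> nat) (c : nat -> nat -> nat), forall i, J i ->
    [/\ G (x i), oitv (U i) (x i), valid_word (c i) (n i),
      oitv (cyl_itv (c i) (n i)) (x i) &
      qmin * itv_len (U i) <= cyl_len q (c i) (n i) /\ cyl_len q (c i) (n i) < itv_len (U i)].
Proof.
move=> hG U_le1 meetG.
have pick i : exists t : R * nat * (nat -> nat), J i ->
    [/\ G t.1.1, oitv (U i) t.1.1, valid_word t.2 t.1.2, oitv (cyl_itv t.2 t.1.2) t.1.1 &
      qmin * itv_len (U i) <= cyl_len q t.2 t.1.2 /\ cyl_len q t.2 t.1.2 < itv_len (U i)].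
  have [Ji|] := boolP (J i); last by exists (0, 0%N, fun=> 0%N).
  have [y [Uy Gy]] := meetG i Ji; have [y01 y_not_end] := hG y Gy.
  have len_gt0 : 0 < itv_len (U i).
    by move: Uy => /andP[Uy1 Uy2]; rewrite /itv_len subr_gt0; lra.
  have [m [w [cw yw lo hi]]] := cyl_around y01 y_not_end len_gt0 (U_le1 i Ji).
  by exists (y, m, w).
have [f hf] := choice pick.
by exists (fun i => (f i).1.1), (fun i => (f i).1.2), (fun i => (f i).2).
Qed.

Lemma packing0_unc_eq0 alpha beta eps B (G : set R) :
  0 <= alpha -> alpha < beta -> 0 < eps ->
  (forall y, G y -> 0 <= y <= 1 /\ forall m, y != cyl_endpoint m) ->
  (packing_pre Phi alpha eps G <= B%:E)%E ->
  packing0 setT beta G = 0%E.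
Proof.
move=> alpha_ge0 alpha_lt_beta eps_gt0 hG pre_le.
have B_ge0 : 0 <= B by rewrite -lee_fin (le_trans (packing_pre_ge0 _ _ _ _) pre_le).
pose gam := (beta - alpha) / 2.
have gam_gt0 : 0 < gam by rewrite divr_gt0 // subr_gt0.
have beta_split : beta = alpha + gam + gam by rewrite /gam; field.
have /andP[rho_gt0 rho_lt1] := one_sub_qmin_bounds.
pose r := (1 - qmin) `^ gam.
have r01 : 0 < r < 1.
  rewrite powR_gt0 //=; apply: (@lt_le_trans _ _ (1 `^ gam)); last by rewrite powR1.
  by apply: gt0_ltr_powR; rewrite ?nnegrE ?ler01 // ltW.
pose K := qmin^-1 `^ beta.
pose C := K * ((B + B) / (1 - r)).
apply: (packing0_eq0 (eta0 := Order.min eps 1) (C := C) (gam := gam)) => //.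
- by rewrite lt_min eps_gt0 ltr01.
- have /andP[_ r_lt1] := r01.
  apply: mulr_ge0; first exact: powR_ge0.
  by apply: divr_ge0; [exact: addr_ge0|rewrite subr_ge0 ltW].
move=> eta eta_gt0; rewrite le_min => /andP[eta_le_eps eta_le1].
apply: ge_ereal_sup => _ [J [U [[_ U_le meetG disjU] ->]]].
have U_le1 i : J i -> itv_len (U i) <= 1 by move=> /U_le /le_trans; apply.
have [x [n [c hc]]] := cyls_in_packing hG U_le1 meetG.
pose l i := cyl_len q (c i) (n i).
apply: nneseries_le_bound => [i _|k]; first by rewrite lee_fin powR_ge0.
rewrite sumEFin lee_fin.
apply: le_trans (_ : \sum_(0 <= i < k | J i)
    K * eta `^ gam * (l i `^ alpha * r ^+ n i) <= _).
  apply: ler_sum => i Ji; have [_ _ cv _ [lo hi]] := hc i Ji.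
  have l_gt0 : 0 < l i by exact: cyl_len_gt0.
  rewrite /K beta_split; apply: powR_le_split => //.
  - exact: ltW.
  - exact: ltW.
  - exact: ltW (lt_trans l_gt0 hi).
  - exact: le_trans (ltW hi) (U_le i Ji).
  - exact: cyl_len_le.
rewrite -mulr_sumr [leRHS]mulrAC.
apply: ler_wpM2l; first by rewrite mulr_ge0 ?powR_ge0.
apply: sum_le_by_levels => //; first exact: addr_ge0.
move=> j; apply: (@rank_sum_le alpha eps B G J U x n c k j pre_le); last exact: disjU.
move=> i Ji; have [Gx Ux cv xc [_ hi]] := hc i Ji; split => //; split => //.
exact: le_trans (ltW hi) (le_trans (U_le i Ji) eta_le_eps).
Qed.

Lemma packing_measure_unc_eq0 alpha beta (E : set R) :
  E `<=` `[0, 1] -> 0 <= alpha -> alpha < beta ->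
  packing_measure Phi alpha E = 0%E -> packing_measure setT beta E = 0%E.
Proof.
move=> E01 alpha_ge0 alpha_lt_beta null_alpha.
have : (packing_measure Phi alpha E < 1)%E by rewrite null_alpha lte01.
move=> /packing_measure_lt1_cover [F [eps [cover hF]]].
pose G j := [set y | F j y /\ 0 <= y <= 1 /\ forall m, y != cyl_endpoint m].
(* The endpoints, which [G] avoids, are covered by the odd-indexed singletons. *)
pose H n := if odd n then [set cyl_endpoint n./2] else G n./2.
apply: (packing_measure_eq0_cover (F := H)) => [y Ey|n].
  have [j _ Fy] := cover y Ey.
  have [[m ->]|not_end] := pselect (exists m, y = cyl_endpoint m).
    by exists m.*2.+1 => //; rewrite /H /= odd_double /= uphalf_double.
  exists j.*2 => //; rewrite /H odd_double half_double; split => //; split.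
    by have := E01 y Ey; rewrite /= in_itv.
  by move=> m; apply/eqP => y_end; apply: not_end; exists m.
rewrite /H; case: ifP => _; first by apply: packing0_set1; lra.
have [eps_gt0 pre_lt1] := hF n./2.
apply: (packing0_unc_eq0 (alpha := alpha) (eps := eps n./2) (B := 1)) => //.
  by move=> y [].
by apply: le_trans (ltW pre_lt1); apply: packing_pre_le => // y [].
Qed.

End CylindricPackings.

Theorem theorem6 (R : realType) (N : nat -> nat) (q : nat -> nat -> R)
  (hN : forall k, (2 <= N k)%N)
  (hpos : forall k i, (i < N k)%N -> 0 < q i k)
  (hsum : forall k, \sum_(i < N k) q i k = 1)
  (hprod : (fun n => \prod_(k < n) \big[Num.max/0]_(i < N k) q i k) @ \oo --> (0 : R))
  (hmin : exists qmin : R, 0 < qmin /\ forall k i, (i < N k)%N -> qmin <= q i k)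
  (E : set R) (hE : E `<=` `[0, 1]) :
  dimP_fam (cylindric_intervals N q) E = dimP_unc E.
Proof.
have [qmin [qmin_gt0 qmin_le]] := hmin.
rewrite /dimP_fam /dimP_unc; apply: packing_dim_eq => [//|a b a_ge0 a_lt_b].
exact: (packing_measure_unc_eq0 hN hpos hsum qmin_gt0 qmin_le hE).
Qed.
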